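(* Let $T\in\mathbb{B}(\mathscr{H})$. Then \[ \omega(T)\le \frac12\sqrt{2\,\omega(|T|\,|T^*|)+\left\||T|^2+|T^*|^2\right\|}\le \frac12\left(\|T^2\|^{1/2}+\|T\|\right). \]
   Context: $\mathscr{H}$ is a complex Hilbert space, $\mathbb{B}(\mathscr{H})$ the algebra of bounded linear operators on it, $T^*$ the adjoint, $|T|=(T^*T)^{1/2}$, $\|T\|$ the operator norm, and $\omega(T)=\sup_{\|x\|=1}|\langle Tx,x\rangle|$ the numerical radius. *)

From mathcomp Require Import all_boot all_order all_algebra.
From mathcomp Require Import complex.
From mathcomp Require Import all_classical all_reals.
Set Implicit Arguments. Unset Strict Implicit. Unset Printing Implicit Defensive.
Import Order.TTheory GRing.Theory Num.Theory.
Local Open Scope ring_scope.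
Local Open Scope classical_set_scope.

Section Hilbert.
Variable R : realType.
Local Notation C := R[i].
Variable H : lmodType C.
Variable ip : H -> H -> C.   (* inner product <x, y>, linear in x *)

Definition cmod (z : C) : R := Num.sqrt (complex.Re z ^+ 2 + complex.Im z ^+ 2).

Definition hnorm (x : H) : R := Num.sqrt (complex.Re (ip x x)).

Definition is_hilbert : Prop :=
  [/\ (forall (a : C) (x y z : H), ip (a *: x + y) z = a * ip x z + ip y z),
      (forall x y : H, ip y x = (ip x y)^*),
      (forall x : H, 0 <= ip x x),
      (forall x : H, ip x x = 0 -> x = 0) &
      (forall u : nat -> H,
         (forall e : R, 0 < e -> exists N : nat, forall m n : nat,
             (N <= m)%N -> (N <= n)%N -> hnorm (u m - u n) < e) ->
         exists l : H, forall e : R, 0 < e -> exists N : nat, forall n : nat,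
             (N <= n)%N -> hnorm (u n - l) < e)].

Definition is_bounded_op (T : H -> H) : Prop :=
  (forall (a : C) (x y : H), T (a *: x + y) = a *: T x + T y) /\
  (exists M : R, forall x : H, hnorm (T x) <= M * hnorm x).

Definition opnorm (T : H -> H) : R :=
  sup [set r : R | exists x : H, hnorm x = 1 /\ r = hnorm (T x)].

Definition numrad (T : H -> H) : R :=
  sup [set r : R | exists x : H, hnorm x = 1 /\ r = cmod (ip (T x) x)].

Definition is_adjoint (T S : H -> H) : Prop :=
  forall x y : H, ip (T x) y = ip x (S y).

Definition is_positive (A : H -> H) : Prop := forall x : H, 0 <= ip (A x) x.

Definition is_pos_sqrt (P A : H -> H) : Prop :=
  [/\ is_bounded_op A, is_positive A & forall x : H, A (A x) = P x].

End Hilbert.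

(* The first inequality rests on Kato's mixed Schwarz inequality
   |<T x, y>|^2 <= <|T| x, x> <|T^*| y, y>, which gives, for a unit vector x,
   |<T x, x>|^2 <= (<|T| x, x> + <|T^*| x, x>)^2 / 4 <= ||(|T| + |T^*|) x||^2 / 4,
   and ||(|T| + |T^*|) x||^2 = <(|T|^2 + |T^*|^2) x, x> + 2 Re <|T| |T^*| x, x>.
   The mixed Schwarz inequality is proved without spectral calculus: for
   0 <= S <= I the iteration S_(n+1) = S_n - S_n^2 drives S_n x to 0, which
   yields (i) S K >= 0 whenever K >= 0 commutes with S, hence the intertwining
   T |T| = |T^*| T, and (ii) positivity of the block form of [[|T|, T^*], [T, |T^*|]].
   The second inequality follows from w(|T| |T^*|) <= ||T^2||,
   || |T|^2 + |T^*|^2 || <= ||T||^2 + ||T^2|| and ||T^2|| <= ||T||^2. *)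

From mathcomp Require Import all_boot all_order all_algebra.
From mathcomp Require Import complex.
From mathcomp Require Import all_classical all_reals.
From mathcomp Require Import ring lra.
Set Implicit Arguments. Unset Strict Implicit.
Import Order.TTheory GRing.Theory Num.Theory.
Local Open Scope classical_set_scope.
Local Open Scope complex_scope.
Local Open Scope ring_scope.

Lemma quadratic_discriminant (R : realFieldType) (a c n : R) :
  0 <= a -> 0 <= c -> 0 <= n ->
  (forall t : R, 0 <= a - 2 * t * n + t ^+ 2 * n * c) -> n <= a * c.
Proof.
move=> a0 c0 n0 quad_ge0.
have [->|n_neq0] := eqVneq n 0; first exact: mulr_ge0.
have n_gt0 : 0 < n by rewrite lt_def n_neq0 n0.
have [c_eq0|c_neq0] := eqVneq c 0.
  have := quad_ge0 ((a + 1) / n); rewrite c_eq0 mulr0 addr0 -mulrA divfK //.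
  lra.
have := quad_ge0 c^-1.
have -> : a - 2 * c^-1 * n + c^-1 ^+ 2 * n * c = a - n / c by field.
by rewrite subr_ge0 ler_pdivrMr // lt_def c_neq0 c0.
Qed.

Lemma twice_le_add_of_sqr_le (R : realFieldType) (r a b : R) :
  0 <= a -> 0 <= b -> r ^+ 2 <= a * b -> 2 * r <= a + b.
Proof.
move=> a0 b0; rewrite expr2 => rr_le.
rewrite leNgt; apply/negP => lt_r.
have : 0 < (2 * r - (a + b)) * (2 * r + (a + b)) by apply: mulr_gt0; lra.
have := sqr_ge0 (a - b); rewrite expr2; nra.
Qed.

Lemma le_of_sqr_le_mul (R : realFieldType) (x k : R) :
  0 <= x -> 0 <= k -> x ^+ 2 <= k * x -> x <= k.
Proof.
move=> x0 k0; rewrite expr2 => xx_le.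
rewrite leNgt; apply/negP => lt_kx.
have : k * x < x * x by rewrite ltr_pM2r //; exact: le_lt_trans lt_kx.
lra.
Qed.

Lemma ge0_of_dominated (R : realType) (r k : R) (q m : nat -> R) :
  0 <= k -> (forall e, 0 < e -> exists n, m n < e) ->
  (forall n, q n <= r) -> (forall n, q n ^+ 2 <= k * m n) -> 0 <= r.
Proof.
move=> k0 m_small q_le q_sqr; rewrite leNgt; apply/negP => r_lt0.
have rr_gt0 : 0 < r ^+ 2 by rewrite expr2; nra.
have [n mn_lt] := m_small (r ^+ 2 / (k + 1)) (divr_gt0 rr_gt0 (ltr_wpDl k0 ltr01)).
rewrite ltr_pdivlMr in mn_lt; last lra.
have rr_le : r ^+ 2 <= q n ^+ 2.
  have qn_le := q_le n.
  by rewrite -[r ^+ 2]sqrrN -[q n ^+ 2]sqrrN lerXn2r ?nnegrE ?lerN2 //; lra.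
have km_lt : k * m n < r ^+ 2.
  have [mn_le0|mn_gt0] := leP (m n) 0.
    by rewrite (le_lt_trans _ rr_gt0) ?mulr_ge0_le0.
  by apply: le_lt_trans mn_lt; rewrite mulrC ler_pM2l // lerDl.
have := q_sqr n; lra.
Qed.

(* Indeed 2 w + p <= 3 ||T^2|| + ||T||^2 and ||T^2|| <= ||T^2||^(1/2) ||T||. *)
Lemma sqrt_2w_add_p_le (R : realType) (w p t t2 : R) :
  0 <= t -> 0 <= t2 -> t2 <= t ^+ 2 -> w <= t2 -> p <= t ^+ 2 + t2 ->
  Num.sqrt (2 * w + p) <= Num.sqrt t2 + t.
Proof.
move=> t0 t20 t2_le w_le p_le.
set u := Num.sqrt t2; have u0 : 0 <= u := sqrtr_ge0 t2.
have uu : u ^+ 2 = t2 by rewrite sqr_sqrtr.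
have u_le : u <= t by rewrite -(ger0_norm t0) -sqrtr_sqr ler_wsqrtr.
rewrite -(ger0_norm (addr_ge0 u0 t0)) -sqrtr_sqr ler_wsqrtr //.
have : 0 <= u * (t - u) by apply: mulr_ge0; lra.
rewrite -uu !expr2 in t2_le w_le p_le *; nra.
Qed.

Section ComplexFacts.
Variable R : realType.
Local Notation C := R[i].
Local Notation Re := (@complex.Re R).
Local Notation Im := (@complex.Im R).

Definition sqmod (z : C) : R := Re z ^+ 2 + Im z ^+ 2.

Lemma sqmod_ge0 z : 0 <= sqmod z.
Proof. by apply: addr_ge0; apply: sqr_ge0. Qed.

Lemma sqmod_real (r : R) : sqmod r%:C = r ^+ 2.
Proof. by rewrite /sqmod /= expr0n addr0. Qed.

Lemma Re_sqr_le_sqmod z : Re z ^+ 2 <= sqmod z.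
Proof. by rewrite lerDl sqr_ge0. Qed.

Lemma mulcJ_sqmod (z : C) : z * z^* = (sqmod z)%:C.
Proof.
by case: z => a b; rewrite /sqmod /=; simpc; rewrite !expr2; congr (_ +i* _); ring.
Qed.

Lemma conj_real (r : R) : r%:C^* = r%:C.
Proof. by apply/eqP; rewrite eq_complex /= oppr0 !eqxx. Qed.

Lemma ReD (z w : C) : Re (z + w) = Re z + Re w. Proof. by case: z; case: w. Qed.
Lemma ReN (z : C) : Re (- z) = - Re z. Proof. by case: z. Qed.
Lemma ReB (z w : C) : Re (z - w) = Re z - Re w. Proof. by rewrite ReD ReN. Qed.
Lemma ReJ (z : C) : Re z^* = Re z. Proof. by case: z. Qed.
Lemma Re_realM (r : R) (z : C) : Re (r%:C * z) = r * Re z.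
Proof. by case: z => a b /=; simpc. Qed.

Lemma ge0_real (z : C) : 0 <= z -> z = (Re z)%:C.
Proof. by case: z => a b; rewrite lecE /= => /andP[/eqP -> _]. Qed.

Lemma ge0_Re (z : C) : 0 <= z -> 0 <= Re z.
Proof. by case: z => a b; rewrite lecE /= => /andP[]. Qed.

Lemma cmodE (z : C) : cmod z = Num.sqrt (sqmod z). Proof. by []. Qed.

Lemma Re_le_cmod (z : C) : Re z <= cmod z.
Proof.
rewrite cmodE; apply: le_trans (real_ler_norm (num_real _)) _.
by rewrite -sqrtr_sqr ler_wsqrtr // Re_sqr_le_sqmod.
Qed.

End ComplexFacts.


Section Sesquilinear.
Variable R : realType.
Local Notation C := R[i].
Variable V : lmodType C.
Variable g : V -> V -> C.
Hypothesis gDl : forall a x y z, g (a *: x + y) z = a * g x z + g y z.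
Hypothesis gDr : forall a x y z, g z (a *: x + y) = a^* * g z x + g z y.

Lemma sesq0l z : g 0 z = 0.
Proof.
have := gDl 1 0 0 z; rewrite scale1r addr0 mul1r => g0.
by apply: (addrI (g 0 z)); rewrite addr0 -g0.
Qed.

Lemma sesq0r z : g z 0 = 0.
Proof.
have := gDr 1 0 0 z; rewrite scale1r addr0 rmorph1 mul1r => g0.
by apply: (addrI (g z 0)); rewrite addr0 -g0.
Qed.

Lemma sesqDl x y z : g (x + y) z = g x z + g y z.
Proof. by rewrite -[x in LHS]scale1r gDl mul1r. Qed.

Lemma sesqDr x y z : g z (x + y) = g z x + g z y.
Proof. by rewrite -[x in LHS]scale1r gDr rmorph1 mul1r. Qed.

Lemma sesqZl a x z : g (a *: x) z = a * g x z.
Proof. by rewrite -[a *: x]addr0 gDl sesq0l addr0. Qed.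

Lemma sesqZr a x z : g z (a *: x) = a^* * g z x.
Proof. by rewrite -[a *: x]addr0 gDr sesq0r addr0. Qed.

Lemma sesqNl x z : g (- x) z = - g x z.
Proof. by rewrite -scaleN1r sesqZl mulN1r. Qed.

Lemma sesqNr x z : g z (- x) = - g z x.
Proof. by rewrite -scaleN1r sesqZr rmorphN rmorph1 mulN1r. Qed.

Lemma sesqBl x y z : g (x - y) z = g x z - g y z.
Proof. by rewrite sesqDl sesqNl. Qed.

Lemma sesqBr x y z : g z (x - y) = g z x - g z y.
Proof. by rewrite sesqDr sesqNr. Qed.

Lemma sesq_diag0 : (forall x, g x x = 0) -> forall x y, g x y = 0.
Proof.
move=> g_diag x y.
have g_anti : g y x = - g x y.
  by have := g_diag (x + y); rewrite sesqDl !sesqDr !g_diag add0r addr0 => /addr0_eq.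
have := g_diag (x + 'i *: y).
rewrite sesqDl !sesqDr !sesqZl !sesqZr !g_diag g_anti !mulr0 add0r addr0.
have -> : ('i : C)^* = - 'i by apply/eqP; rewrite eq_complex /= oppr0 !eqxx.
rewrite mulrN mulNr -opprD -mulr2n => /eqP; rewrite oppr_eq0 mulrn_eq0 /= mulf_eq0.
by case/orP=> [|/eqP //]; rewrite eq_complex /= oner_eq0 andbF.
Qed.

End Sesquilinear.

Section Hermitian.
Variable R : realType.
Local Notation C := R[i].
Local Notation Re := (@complex.Re R).
Variable V : lmodType C.
Variable f : V -> V -> C.
Hypothesis fDl : forall a x y z, f (a *: x + y) z = a * f x z + f y z.
Hypothesis fC : forall x y, f y x = (f x y)^*.

Lemma herm_Dr a x y z : f z (a *: x + y) = a^* * f z x + f z y.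
Proof. by rewrite fC fDl rmorphD rmorphM /= -!fC. Qed.

Lemma herm_ReC x y : Re (f y x) = Re (f x y).
Proof. by rewrite fC ReJ. Qed.

Hypothesis fP : forall x, 0 <= f x x.

Lemma herm_CS x y : sqmod (f x y) <= Re (f x x) * Re (f y y).
Proof.
set b := f x y; set a := Re (f x x); set c := Re (f y y).
apply: quadratic_discriminant; [exact: ge0_Re | exact: ge0_Re | exact: sqmod_ge0 |].
move=> t; have := fP (x - (t%:C * b) *: y).
rewrite (sesqBl fDl) !(sesqBr herm_Dr) !(sesqZl fDl) !(sesqZr herm_Dr).
rewrite -/b [f y x]fC -/b (ge0_real (fP x)) (ge0_real (fP y)) rmorphM /= conj_real -/a -/c.
have -> : a%:C - t%:C * b^* * b - (t%:C * b * b^* - t%:C * b * (t%:C * b^* * c%:C))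
   = a%:C - 2%:R * t%:C * (b * b^*) + t%:C ^+ 2 * (b * b^*) * c%:C by ring.
rewrite mulcJ_sqmod.
have -> : a%:C - 2%:R * t%:C * (sqmod b)%:C + t%:C ^+ 2 * (sqmod b)%:C * c%:C
   = (a - 2 * t * sqmod b + t ^+ 2 * sqmod b * c)%:C.
  by rewrite !(rmorphB, rmorphD, rmorphM, rmorphXn, rmorph_nat).
by rewrite ler0c.
Qed.

End Hermitian.

Definition is_linear (R : realType) (V : lmodType R[i]) (X : V -> V) :=
  forall (a : R[i]) x y, X (a *: x + y) = a *: X x + X y.

Section LinearFacts.
Variables (R : realType) (V : lmodType R[i]) (X : V -> V).
Hypothesis linX : is_linear X.

Lemma lmap0 : X 0 = 0.
Proof.
have := linX 1 0 0; rewrite !scale1r addr0 => X0.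
by apply: (addrI (X 0)); rewrite addr0 -X0.
Qed.
Lemma lmapD x y : X (x + y) = X x + X y.
Proof. by have := linX 1 x y; rewrite !scale1r. Qed.
Lemma lmapZ a x : X (a *: x) = a *: X x.
Proof. by have := linX a x 0; rewrite !addr0 lmap0 addr0. Qed.
Lemma lmapN x : X (- x) = - X x.
Proof. by rewrite -scaleN1r lmapZ scaleN1r. Qed.
Lemma lmapB x y : X (x - y) = X x - X y.
Proof. by rewrite lmapD lmapN. Qed.

End LinearFacts.

Lemma linear_comp (R : realType) (V : lmodType R[i]) (X Y : V -> V) :
  is_linear X -> is_linear Y -> is_linear (fun x => X (Y x)).
Proof. by move=> linX linY a x y; rewrite linY linX. Qed.

Section InnerProduct.
Variable R : realType.
Local Notation C := R[i].
Local Notation Re := (@complex.Re R).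
Variable V : lmodType C.
Variable ip : V -> V -> C.
Hypothesis ipDl : forall (a : C) x y z, ip (a *: x + y) z = a * ip x z + ip y z.
Hypothesis ipC : forall x y, ip y x = (ip x y)^*.
Hypothesis ipP : forall x, 0 <= ip x x.
Hypothesis ipE : forall x, ip x x = 0 -> x = 0.

Let ipDr := herm_Dr ipDl ipC.

Definition sqnorm x := Re (ip x x).

Lemma ip_diag x : ip x x = (sqnorm x)%:C.
Proof. exact: ge0_real. Qed.

Lemma sqnorm_ge0 x : 0 <= sqnorm x.
Proof. exact: ge0_Re. Qed.

Lemma sqnorm_eq0 x : sqnorm x = 0 -> x = 0.
Proof. by move=> x0; apply: ipE; rewrite ip_diag x0. Qed.

Lemma sqnormD x y : sqnorm (x + y) = sqnorm x + sqnorm y + 2 * Re (ip x y).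
Proof.
rewrite /sqnorm (sesqDl ipDl) !(sesqDr ipDr) !ReD (herm_ReC ipC x y); ring.
Qed.

Lemma sqnormZ a x : sqnorm (a *: x) = sqmod a * sqnorm x.
Proof.
by rewrite /sqnorm (sesqZl ipDl) (sesqZr ipDr) mulrA mulcJ_sqmod ip_diag -rmorphM.
Qed.

Lemma ip_CS x y : sqmod (ip x y) <= sqnorm x * sqnorm y.
Proof. exact: herm_CS. Qed.

Lemma ip_ext u v : (forall z, ip z u = ip z v) -> u = v.
Proof.
move=> uv; apply/eqP; rewrite -subr_eq0; apply/eqP; apply: ipE.
by rewrite (sesqBr ipDr) uv subrr.
Qed.

Lemma adjoint_sym X Y : is_adjoint ip X Y -> is_adjoint ip Y X.
Proof. by move=> XY x y; rewrite ipC -XY -ipC. Qed.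

Lemma adjoint_linear X Y : is_adjoint ip X Y -> is_linear Y.
Proof.
by move=> XY a x y; apply: ip_ext => z; rewrite -XY ipDr !XY ipDr.
Qed.

Lemma op_formDl X : is_linear X ->
  forall a x y z, ip (X (a *: x + y)) z = a * ip (X x) z + ip (X y) z.
Proof. by move=> linX a x y z; rewrite linX ipDl. Qed.

(* A positive operator is self-adjoint: <X x, y> - <x, X y> vanishes on the
   diagonal, hence everywhere by polarization. *)
Lemma positive_selfadjoint X : is_linear X -> is_positive ip X -> is_adjoint ip X X.
Proof.
move=> linX posX x y; apply/eqP; rewrite -subr_eq0; apply/eqP.
apply: (sesq_diag0 (g := fun u v => ip (X u) v - ip u (X v))) => {x y}.
1,2: by move=> a x y z /=; rewrite (linX a x y) ?ipDl ?ipDr; ring.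
by move=> x; rewrite [ip x _]ipC (ge0_real (posX x)) conj_real subrr.
Qed.

Lemma positive_CS X : is_linear X -> is_positive ip X ->
  forall x y, sqmod (ip (X x) y) <= Re (ip (X x) x) * Re (ip (X y) y).
Proof.
move=> linX posX; have adjX := positive_selfadjoint linX posX.
by apply: herm_CS (op_formDl linX) _ posX => x y; rewrite adjX ipC.
Qed.

Definition below_id X := forall x, Re (ip (X x) x) <= sqnorm x.

Lemma sqnorm_le_form X : is_linear X -> is_positive ip X -> below_id X ->
  forall x, sqnorm (X x) <= Re (ip (X x) x).
Proof.
move=> linX posX X_le1 x.
have cs := positive_CS linX posX x (X x).
rewrite ip_diag sqmod_real in cs.
apply: le_of_sqr_le_mul; [exact: sqnorm_ge0 | exact: ge0_Re |].
by apply: le_trans cs _; rewrite ler_wpM2l ?ge0_Re ?X_le1.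
Qed.

(* The iteration S_0 = S, S_(n+1) = S_n - S_n^2, written S_n = S C_n with
   cofactors C_0 = I, C_(n+1) = C_n - C_n S C_n, which are polynomials in S. *)
Fixpoint sqiter_cof (S : V -> V) (n : nat) : V -> V :=
  if n is n'.+1 then fun x => sqiter_cof S n' x - sqiter_cof S n' (S (sqiter_cof S n' x))
  else id.

Definition sqiter S n x := S (sqiter_cof S n x).

Lemma sqiter_cof_intertwine X S1 S2 n : is_linear X -> (forall x, X (S1 x) = S2 (X x)) ->
  forall x, X (sqiter_cof S1 n x) = sqiter_cof S2 n (X x).
Proof.
move=> linX XS; elim: n => [//|n IH] x /=.
by rewrite (lmapB linX) IH IH XS IH.
Qed.

Section SquareIteration.
Variable S : V -> V.
Hypotheses (linS : is_linear S) (adjS : is_adjoint ip S S).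

Lemma sqiter_cof_linear n : is_linear (sqiter_cof S n).
Proof.
elim: n => [//|n IH] a x y /=.
by rewrite !IH (lmapD linS) (lmapZ linS) IH scalerBr opprD addrACA.
Qed.

Lemma sqiter_cof_selfadjoint n : is_adjoint ip (sqiter_cof S n) (sqiter_cof S n).
Proof.
elim: n => [//|n IH] x y /=.
by rewrite (sesqBl ipDl) (sesqBr ipDr) !IH adjS IH.
Qed.

Lemma sqiter_cof_comm n x : S (sqiter_cof S n x) = sqiter_cof S n (S x).
Proof. exact: sqiter_cof_intertwine. Qed.

Lemma sqiter_linear n : is_linear (sqiter S n).
Proof. exact: linear_comp linS (sqiter_cof_linear n). Qed.

Lemma sqiter_selfadjoint n : is_adjoint ip (sqiter S n) (sqiter S n).
Proof.
by move=> x y; rewrite /sqiter adjS sqiter_cof_selfadjoint sqiter_cof_comm.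
Qed.

Lemma sqiterS n x : sqiter S n.+1 x = sqiter S n x - sqiter S n (sqiter S n x).
Proof. by rewrite /sqiter /= (lmapB linS). Qed.

Lemma sqiter_cofS n x :
  sqiter_cof S n x = sqiter_cof S n (sqiter S n x) + sqiter_cof S n.+1 x.
Proof. by rewrite /= addrC subrK. Qed.

Lemma sqiter_formS n x :
  Re (ip (sqiter S n.+1 x) x) = Re (ip (sqiter S n x) x) - sqnorm (sqiter S n x).
Proof.
by rewrite sqiterS (sesqBl ipDl) ReB [ip (sqiter S n (sqiter S n x)) x]sqiter_selfadjoint.
Qed.

Hypotheses (posS : is_positive ip S) (S_le1 : below_id S).

Lemma sqiter_bounds n : is_positive ip (sqiter S n) /\ below_id (sqiter S n).
Proof.
elim: n => [//|n [posSn Sn_le1]].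
have sq_le := sqnorm_le_form (sqiter_linear n) posSn Sn_le1.
split => x.
- rewrite sqiterS (sesqBl ipDl) [ip (sqiter S n (sqiter S n x)) x]sqiter_selfadjoint.
  by rewrite ip_diag (ge0_real (posSn x)) -rmorphB ler0c subr_ge0.
- by rewrite sqiter_formS; have := Sn_le1 x; have := sqnorm_ge0 (sqiter S n x); lra.
Qed.

(* Since sum_k ||S_k x||^2 <= <S x, x>, the vectors S_n x get arbitrarily small. *)
Lemma sqiter_small x e : 0 < e -> exists n, sqnorm (sqiter S n x) < e.
Proof.
move=> e_gt0; apply/not_existsP => big.
have telescope n : Re (ip (sqiter S n x) x) + n%:R * e <= Re (ip (S x) x).
  elim: n => [|n IH]; first by rewrite mul0r addr0.
  have /negP := big n; rewrite -leNgt sqiter_formS -natr1 mulrDl mul1r; lra.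
pose N := Num.Def.archi_bound (Re (ip (S x) x) / e).
have N_gt : Re (ip (S x) x) / e < N%:R.
  by apply: archi_boundP; apply: divr_ge0; [exact: ge0_Re | exact: ltW].
rewrite ltr_pdivrMr // in N_gt.
have := telescope N; have := ge0_Re ((sqiter_bounds N).1 x); lra.
Qed.

(* If K >= 0 commutes with S, then Re <S K x, x> >= 0: the numbers
   Re <S_n K x, x> decrease from Re <S K x, x>, while
   |<S_n K x, x>| <= ||K x|| ||S_n x|| becomes arbitrarily small. *)
Lemma commuting_product_ge0 K : is_linear K -> is_positive ip K ->
  (forall x, K (S x) = S (K x)) -> forall x, 0 <= Re (ip (S (K x)) x).
Proof.
move=> linK posK KS x.
have K_sqiter n y : K (sqiter S n y) = sqiter S n (K y).
  by rewrite /sqiter KS (sqiter_cof_intertwine n linK KS).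
pose q n := Re (ip (sqiter S n (K x)) x).
apply: (ge0_of_dominated (sqnorm_ge0 (K x)) (sqiter_small x) (q := q)).
- have step n : q n.+1 <= q n.
    rewrite /q sqiterS (sesqBl ipDl) ReB.
    rewrite [ip (sqiter S n (sqiter S n (K x))) x]sqiter_selfadjoint -K_sqiter.
    by have := ge0_Re (posK (sqiter S n x)); lra.
  by elim=> [//|n IH]; apply: le_trans (step n) IH.
- move=> n; apply: le_trans (Re_sqr_le_sqmod _) _.
  by rewrite /q sqiter_selfadjoint ip_CS.
Qed.

End SquareIteration.

(* Positivity of the block form <A x, x> + 2 Re <T x, y> + <B y, y>, i.e. of the
   operator matrix [[A, T^*], [T, B]], when 0 <= A, B <= I, A^2 = T^* T,
   B^2 = T T^* and T A = B T.  One runs the iteration on A and B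
   simultaneously; the block form of (A_n, T C_n, B_n) decreases in n and its
   middle term is controlled by ||A_n x||, which tends to 0. *)
Section BlockPositivity.
Variables T Ts A B : V -> V.
Hypotheses (linT : is_linear T) (adjT : is_adjoint ip T Ts).
Hypotheses (linA : is_linear A) (posA : is_positive ip A) (A_le1 : below_id A).
Hypotheses (linB : is_linear B) (posB : is_positive ip B) (B_le1 : below_id B).
Hypotheses (AA : forall x, A (A x) = Ts (T x)) (BB : forall x, B (B x) = T (Ts x)).
Hypothesis TA : forall x, T (A x) = B (T x).

Let adjA := positive_selfadjoint linA posA.
Let adjB := positive_selfadjoint linB posB.

Let T_cof n x : T (sqiter_cof A n x) = sqiter_cof B n (T x).
Proof. exact: sqiter_cof_intertwine. Qed.

Let sqnorm_cof_adjoint n y : sqnorm (sqiter_cof A n (Ts y)) = sqnorm (sqiter B n y).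
Proof.
rewrite /sqnorm (sqiter_cof_selfadjoint adjA) (herm_ReC ipC) -adjT !T_cof.
rewrite /sqiter [ip (B _) (B _)]adjB (herm_ReC ipC) (sqiter_cof_selfadjoint adjB).
by rewrite -!BB !(sqiter_cof_comm linB).
Qed.

Let block n x y := Re (ip (sqiter A n x) x) + 2 * Re (ip (T (sqiter_cof A n x)) y)
  + Re (ip (sqiter B n y) y).

(* block n - block n.+1 = ||A_n x + C_n^A T^* y||^2. *)
Let block_step n x y : block n.+1 x y <= block n x y.
Proof.
rewrite /block (sqiter_formS linA adjA) (sqiter_formS linB adjB).
rewrite [sqiter_cof A n x](sqiter_cofS A n x) (lmapD linT) (sesqDl ipDl) ReD.
rewrite [ip (T (sqiter_cof A n (sqiter A n x))) y]adjT.
rewrite (sqiter_cof_selfadjoint adjA) -sqnorm_cof_adjoint.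
have := sqnorm_ge0 (sqiter A n x + sqiter_cof A n (Ts y)); rewrite sqnormD; lra.
Qed.

Lemma block_form_ge0 x y :
  0 <= Re (ip (A x) x) + 2 * Re (ip (T x) y) + Re (ip (B y) y).
Proof.
pose q n := 2 * Re (ip (T (sqiter_cof A n x)) y).
have An_small := sqiter_small linA adjA posA A_le1 x.
apply: (ge0_of_dominated (k := 4 * sqnorm y) _ An_small (q := q)).
- by apply: mulr_ge0; [lra | exact: sqnorm_ge0].
- move=> n; have : block n x y <= block 0 x y.
    by elim: n => [//|n IH]; exact: le_trans (block_step n x y) IH.
  have := ge0_Re ((sqiter_bounds linA adjA posA A_le1 n).1 x).
  have := ge0_Re ((sqiter_bounds linB adjB posB B_le1 n).1 y).
  rewrite /block /q /=; lra.
- move=> n; rewrite /q exprMn.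
  have -> : sqnorm (sqiter A n x) = sqnorm (T (sqiter_cof A n x)).
    by rewrite /sqnorm /sqiter adjA AA -adjT.
  set z := ip (T (sqiter_cof A n x)) y.
  have := ip_CS (T (sqiter_cof A n x)) y; have := Re_sqr_le_sqmod z.
  rewrite -/z (_ : 2 ^+ 2 = 4); last by rewrite expr2; lra.
  have := sqnorm_ge0 y; nra.
Qed.

End BlockPositivity.

(* Bounds transfer to the adjoint: ||T x||^2 <= c ||x||^2 implies
   ||T^* x||^2 <= c ||x||^2, since ||T^* x||^2 = <T T^* x, x>. *)
Lemma adjoint_bounded T Ts c : is_adjoint ip T Ts -> 0 <= c ->
  (forall x, sqnorm (T x) <= c * sqnorm x) -> forall x, sqnorm (Ts x) <= c * sqnorm x.
Proof.
move=> adjT c0 Tc x.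
have TTs : sqnorm (Ts x) = Re (ip (T (Ts x)) x) by rewrite /sqnorm adjT.
apply: le_of_sqr_le_mul; [exact: sqnorm_ge0 | by apply: mulr_ge0; rewrite ?sqnorm_ge0 |].
rewrite [X in X ^+ 2]TTs; apply: le_trans (Re_sqr_le_sqmod _) _.
apply: le_trans (ip_CS _ _) _.
by rewrite mulrAC ler_wpM2r ?sqnorm_ge0 ?Tc.
Qed.

Lemma positive_null X x : is_linear X -> is_positive ip X ->
  Re (ip (X x) x) <= 0 -> X x = 0.
Proof.
move=> linX posX form_le0; apply: sqnorm_eq0; apply/eqP.
have := positive_CS linX posX x (X x); rewrite ip_diag sqmod_real.
have -> : Re (ip (X x) x) = 0 by apply/eqP; rewrite eq_le form_le0 ge0_Re.
by rewrite mul0r => X2_le0; rewrite -sqrf_eq0 eq_le X2_le0 sqr_ge0.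
Qed.

Definition scale_op (s : R) (X : V -> V) := fun x => s%:C *: X x.

Lemma scale_op_linear s X : is_linear X -> is_linear (scale_op s X).
Proof. by move=> linX a x y; rewrite /scale_op linX scalerDr !scalerA mulrC. Qed.

Lemma scale_op_adjoint s X Y :
  is_adjoint ip X Y -> is_adjoint ip (scale_op s X) (scale_op s Y).
Proof. by move=> XY x y; rewrite /scale_op (sesqZl ipDl) (sesqZr ipDr) conj_real XY. Qed.

Lemma Re_scale_op s X x y : Re (ip (scale_op s X x) y) = s * Re (ip (X x) y).
Proof. by rewrite /scale_op (sesqZl ipDl) Re_realM. Qed.

Lemma scale_op_positive s X : 0 <= s -> is_positive ip X -> is_positive ip (scale_op s X).
Proof.
move=> s0 posX x; rewrite /scale_op (sesqZl ipDl) (ge0_real (posX x)) -rmorphM ler0c.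
exact: mulr_ge0 (ge0_Re _).
Qed.

Lemma scale_op_below_id X c : is_linear X -> is_positive ip X -> 0 <= c ->
  (forall x, sqnorm (X x) <= c * sqnorm x) -> below_id (scale_op (c + 1)^-1 X).
Proof.
move=> linX posX c0 Xc x; rewrite Re_scale_op ler_pdivrMl ?ltr_wpDl //.
set r := Re (ip (X x) x); set q := sqnorm x.
have r0 : 0 <= r := ge0_Re (posX x); have q0 : 0 <= q := sqnorm_ge0 x.
have rr_le : r ^+ 2 <= c * q ^+ 2.
  apply: le_trans (Re_sqr_le_sqmod _) _; apply: le_trans (ip_CS _ _) _.
  by rewrite expr2 mulrA ler_wpM2r ?Xc.
rewrite -(ler_pXn2r (n := 2)) ?nnegrE ?mulr_ge0 ?addr_ge0 //.
apply: le_trans rr_le _; rewrite exprMn ler_wpM2r ?sqr_ge0 // expr2; nra.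
Qed.

(* Kato's mixed Schwarz inequality |<T x, y>|^2 <= <|T| x, x> <|T^*| y, y>
   for A = |T|, B = |T^*|, given as positive square roots of T^* T and T T^*. *)
Section MixedSchwarz.
Variables T Ts A B : V -> V.
Hypotheses (linT : is_linear T) (adjT : is_adjoint ip T Ts).
Hypotheses (linA : is_linear A) (posA : is_positive ip A).
Hypotheses (linB : is_linear B) (posB : is_positive ip B).
Hypotheses (AA : forall x, A (A x) = Ts (T x)) (BB : forall x, B (B x) = T (Ts x)).
Variable c : R.
Hypotheses (c0 : 0 <= c) (Tc : forall x, sqnorm (T x) <= c * sqnorm x).

Let adjA := positive_selfadjoint linA posA.
Let adjB := positive_selfadjoint linB posB.
Let adjTs := adjoint_sym adjT.
Let linTs := adjoint_linear adjT.

Lemma sqnorm_absT x : sqnorm (A x) = sqnorm (T x).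
Proof. by rewrite /sqnorm adjA AA (herm_ReC ipC) adjTs. Qed.

Lemma sqnorm_absTs x : sqnorm (B x) = sqnorm (Ts x).
Proof. by rewrite /sqnorm adjB BB (herm_ReC ipC) adjT. Qed.

Let W x := B (T x) - T (A x).
Let Ws y := Ts (B y) - A (Ts y).

Let adjW : is_adjoint ip W Ws.
Proof. by move=> x y; rewrite /W /Ws (sesqBl ipDl) (sesqBr ipDr) adjB adjT adjT adjA. Qed.

Let linW := adjoint_linear (adjoint_sym adjW).
Let linWs := adjoint_linear adjW.

(* K = W^* W is positive and commutes with A, because B W = - W A. *)
Let K x := Ws (W x).

Let K_positive : is_positive ip K.
Proof. by move=> x; rewrite /K (adjoint_sym adjW); exact: ipP. Qed.

Let AK x : A (K x) = - Ws (B (W x)).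
Proof. by rewrite /K /Ws (lmapB linA) AA BB opprB. Qed.

Let KA x : K (A x) = - Ws (B (W x)).
Proof.
have WA : W (A x) = - B (W x) by rewrite /W (lmapB linB) BB AA opprB.
by rewrite /K WA (lmapN linWs).
Qed.

(* B W = 0: with S = A / (c + 1), 0 <= S <= I commutes with K, so
   0 <= <S K x, x> = - <B W x, W x> / (c + 1) <= 0. *)
Lemma absTs_defect0 x : B (W x) = 0.
Proof.
set s := (c + 1)^-1; have s_gt0 : 0 < s by rewrite invr_gt0 ltr_wpDl.
have linK : is_linear K := linear_comp linWs linW.
have A_le : forall y, sqnorm (A y) <= c * sqnorm y by move=> y; rewrite sqnorm_absT.
have KS y : K (scale_op s A y) = scale_op s A (K y).
  by rewrite /scale_op (lmapZ linK) KA AK.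
have SK_ge0 := commuting_product_ge0 (scale_op_linear s linA) (scale_op_adjoint s adjA)
  (scale_op_positive (ltW s_gt0) posA) (scale_op_below_id linA posA c0 A_le)
  linK K_positive KS x.
apply: positive_null linB posB _.
rewrite Re_scale_op AK (sesqNl ipDl) (adjoint_sym adjW) ReN in SK_ge0.
by rewrite -oppr_ge0 -(pmulr_rge0 _ s_gt0).
Qed.

(* Hence B T = T A: K x = - A T^* W x and A K x = 0 give K x = 0, so W x = 0. *)
Lemma abs_intertwine x : T (A x) = B (T x).
Proof.
have Kx : K x = - A (Ts (W x)) by rewrite /K /Ws absTs_defect0 (lmap0 linTs) add0r.
have AKx : A (K x) = 0 by rewrite AK absTs_defect0 (lmap0 linWs) oppr0.
have Kx0 : K x = 0.
  by apply: sqnorm_eq0; rewrite /sqnorm {1}Kx (sesqNl ipDl) adjA AKx (sesq0r ipDr) oppr0.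
apply/eqP; rewrite eq_sym -subr_eq0 -/(W x); apply/eqP/sqnorm_eq0.
by rewrite /sqnorm adjW -/(K x) Kx0 (sesq0r ipDr).
Qed.

(* The block form of (T, |T|, |T^*|) is positive: apply block_form_ge0 to the
   contractions T / (c + 1), A / (c + 1), B / (c + 1). *)
Lemma abs_block_form_ge0 x y :
  0 <= Re (ip (A x) x) + 2 * Re (ip (T x) y) + Re (ip (B y) y).
Proof.
set s := (c + 1)^-1; have s_gt0 : 0 < s by rewrite invr_gt0 ltr_wpDl.
have A_le u : sqnorm (A u) <= c * sqnorm u by rewrite sqnorm_absT.
have B_le u : sqnorm (B u) <= c * sqnorm u.
  by rewrite sqnorm_absTs (adjoint_bounded adjT c0 Tc).
have sAA u : scale_op s A (scale_op s A u) = scale_op s Ts (scale_op s T u).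
  by rewrite /scale_op !(lmapZ linA) !(lmapZ linTs) AA scalerA.
have sBB u : scale_op s B (scale_op s B u) = scale_op s T (scale_op s Ts u).
  by rewrite /scale_op !(lmapZ linB) !(lmapZ linT) BB scalerA.
have sTA u : scale_op s T (scale_op s A u) = scale_op s B (scale_op s T u).
  by rewrite /scale_op !(lmapZ linT) !(lmapZ linB) abs_intertwine.
have := block_form_ge0 (scale_op_linear s linT) (scale_op_adjoint s adjT)
  (scale_op_linear s linA) (scale_op_positive (ltW s_gt0) posA)
  (scale_op_below_id linA posA c0 A_le)
  (scale_op_linear s linB) (scale_op_positive (ltW s_gt0) posB)
  (scale_op_below_id linB posB c0 B_le) sAA sBB sTA x y.
by rewrite !Re_scale_op mulrCA -!mulrDr pmulr_rge0.
Qed.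

(* Kato's inequality, from the positivity of the block form at (x, - t <T x, y> y). *)
Lemma mixed_schwarz x y : sqmod (ip (T x) y) <= Re (ip (A x) x) * Re (ip (B y) y).
Proof.
set b := ip (T x) y; set a := Re (ip (A x) x); set d := Re (ip (B y) y).
apply: quadratic_discriminant; [exact: ge0_Re | exact: ge0_Re | exact: sqmod_ge0 |].
move=> t; have := abs_block_form_ge0 x (- (t%:C * b) *: y).
rewrite (lmapZ linB) (sesqZl ipDl) !(sesqZr ipDr) -/b -/a (ge0_real (posB y)) -/d.
have -> : (- (t%:C * b))^* * b = (- t * sqmod b)%:C.
  rewrite rmorphN rmorphM /= conj_real mulNr -mulrA [b^* * b]mulrC mulcJ_sqmod.
  by rewrite -rmorphM -rmorphN mulNr.
have -> : - (t%:C * b) * ((- (t%:C * b))^* * d%:C) = (t ^+ 2 * sqmod b * d)%:C.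
  rewrite rmorphN rmorphM /= conj_real.
  have -> : - (t%:C * b) * (- (t%:C * b^*) * d%:C) = t%:C ^+ 2 * (b * b^*) * d%:C.
    by ring.
  by rewrite mulcJ_sqmod -rmorphXn -!rmorphM.
by rewrite /= mulNr mulrN mulrA.
Qed.

End MixedSchwarz.

Lemma sqnorm_unit x : hnorm ip x = 1 -> sqnorm x = 1.
Proof.
by move=> x1; rewrite -[sqnorm x]sqr_sqrtr ?sqnorm_ge0 // -/(hnorm ip x) x1 expr1n.
Qed.

Section UnitSphereSup.
Variable g : V -> R.
Local Notation unit_vals := [set r | exists x, hnorm ip x = 1 /\ r = g x].
Local Notation unit_sup := (sup unit_vals).

Lemma unit_sup_ub M x : (forall y, sqnorm y = 1 -> g y <= M) -> hnorm ip x = 1 ->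
  g x <= unit_sup.
Proof.
move=> gM x1; apply: ub_le_sup; last by exists x.
by exists M => r [y [y1 ->]]; apply/gM/sqnorm_unit.
Qed.

Lemma unit_sup_le b : 0 <= b -> (forall x, sqnorm x = 1 -> g x <= b) -> unit_sup <= b.
Proof.
move=> b0 gb; have [[x x1]|no_unit] := pselect (exists x, hnorm ip x = 1).
  apply: ge_sup; first by exists (g x), x.
  by move=> r [y [y1 ->]]; apply/gb/sqnorm_unit.
suff -> : unit_vals = set0 by rewrite sup0.
by apply/seteqP; split => r // [y [y1 _]]; apply: no_unit; exists y.
Qed.

Lemma unit_sup_ge0 : (forall x, 0 <= g x) -> 0 <= unit_sup.
Proof.
move=> g0; have [has_s|] := pselect (has_sup unit_vals).
  have [r [y [y1 _]]] := has_s.1.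
  by apply: le_trans (g0 y) _; apply: sup_upper_bound => //; exists y.
by move/sup_out => ->.
Qed.

End UnitSphereSup.

Lemma opnorm_ge0 X : 0 <= opnorm ip X.
Proof. by apply: unit_sup_ge0 => x; exact: sqrtr_ge0. Qed.

Lemma numrad_ge0 X : 0 <= numrad ip X.
Proof. by apply: unit_sup_ge0 => x; exact: sqrtr_ge0. Qed.

Lemma cmod_ip_le u x : sqnorm x = 1 -> cmod (ip u x) <= hnorm ip u.
Proof.
by move=> x1; rewrite cmodE ler_wsqrtr // -/(sqnorm u) -[sqnorm u]mulr1 -x1 ip_CS.
Qed.

Lemma sqnorm_le_of_hnorm_le X M : (forall x, hnorm ip (X x) <= M * hnorm ip x) ->
  forall x, sqnorm (X x) <= M ^+ 2 * sqnorm x.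
Proof.
move=> XM x; have Mx0 : 0 <= M * hnorm ip x := le_trans (sqrtr_ge0 _) (XM x).
rewrite -[sqnorm (X x)]sqr_sqrtr ?sqnorm_ge0 // -[sqnorm x]sqr_sqrtr ?sqnorm_ge0 //.
by rewrite -exprMn lerXn2r ?nnegrE ?sqrtr_ge0 //; exact: XM.
Qed.

Lemma hnorm_le_opnorm X c u : (forall y, sqnorm (X y) <= c * sqnorm y) ->
  sqnorm u = 1 -> hnorm ip (X u) <= opnorm ip X.
Proof.
move=> Xc u1; apply: (unit_sup_ub (g := fun y => hnorm ip (X y)) (M := Num.sqrt c)).
  by move=> y y1; rewrite ler_wsqrtr // -[c]mulr1 -y1 Xc.
by rewrite /hnorm -/(sqnorm u) u1 sqrtr1.
Qed.

Lemma sqnorm_le_opnorm X c : is_linear X -> 0 <= c ->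
  (forall x, sqnorm (X x) <= c * sqnorm x) ->
  forall x, sqnorm (X x) <= opnorm ip X ^+ 2 * sqnorm x.
Proof.
move=> linX c0 Xc x.
have [x0|x_neq0] := eqVneq (sqnorm x) 0.
  by rewrite (sqnorm_eq0 x0) (lmap0 linX) /sqnorm (sesq0l ipDl) mulr0.
have x_gt0 : 0 < sqnorm x by rewrite lt_def x_neq0 sqnorm_ge0.
set m := Num.sqrt (sqnorm x); have m_gt0 : 0 < m by rewrite sqrtr_gt0.
have mm : m ^+ 2 = sqnorm x by rewrite sqr_sqrtr ?sqnorm_ge0.
set u := m^-1%:C *: x.
have u1 : sqnorm u = 1 by rewrite sqnormZ sqmod_real -mm -exprMn mulVf ?gt_eqF ?expr1n.
have Xu_le := hnorm_le_opnorm Xc u1.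
have : sqnorm (X u) <= opnorm ip X ^+ 2.
  rewrite -[sqnorm (X u)]sqr_sqrtr ?sqnorm_ge0 // lerXn2r ?nnegrE ?sqrtr_ge0 //.
  exact: le_trans (sqrtr_ge0 _) Xu_le.
rewrite /u (lmapZ linX) sqnormZ sqmod_real exprVn -mm ler_pdivrMl ?exprn_gt0 //.
by rewrite mulrC.
Qed.

Lemma positive_sqnorm_le X k : is_linear X -> is_positive ip X -> 0 <= k ->
  (forall y, Re (ip (X y) y) <= k * sqnorm y) ->
  forall y, sqnorm (X y) <= k ^+ 2 * sqnorm y.
Proof.
move=> linX posX k0 Xk y.
have cs := positive_CS linX posX y (X y); rewrite ip_diag sqmod_real in cs.
apply: le_of_sqr_le_mul; [exact: sqnorm_ge0 | by rewrite mulr_ge0 ?sqr_ge0 ?sqnorm_ge0 |].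
apply: le_trans cs _.
have -> : k ^+ 2 * sqnorm y * sqnorm (X y) = (k * sqnorm y) * (k * sqnorm (X y)) by ring.
by apply: ler_pM; rewrite ?ge0_Re ?Xk.
Qed.

Lemma opnorm_le X b : 0 <= b -> (forall x, sqnorm (X x) <= b ^+ 2 * sqnorm x) ->
  opnorm ip X <= b.
Proof.
move=> b0 Xb; apply: (unit_sup_le (g := fun y => hnorm ip (X y))) => // x x1.
by rewrite -(ger0_norm b0) -sqrtr_sqr ler_wsqrtr // -[b ^+ 2]mulr1 -x1 Xb.
Qed.

Lemma numrad_le X b : 0 <= b ->
  (forall x, sqnorm x = 1 -> sqmod (ip (X x) x) <= b ^+ 2) -> numrad ip X <= b.
Proof.
move=> b0 Xb; apply: (unit_sup_le (g := fun y => cmod (ip (X y) y))) => // x x1.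
by rewrite cmodE -(ger0_norm b0) -sqrtr_sqr ler_wsqrtr // Xb.
Qed.

Lemma Re_form_le_opnorm X c x : (forall y, sqnorm (X y) <= c * sqnorm y) ->
  sqnorm x = 1 -> Re (ip (X x) x) <= opnorm ip X.
Proof.
move=> Xc x1; apply: le_trans (Re_le_cmod _) _; apply: le_trans (cmod_ip_le _ x1) _.
exact: hnorm_le_opnorm Xc x1.
Qed.

Lemma Re_form_le_numrad X c x : (forall y, sqnorm (X y) <= c * sqnorm y) ->
  sqnorm x = 1 -> Re (ip (X x) x) <= numrad ip X.
Proof.
move=> Xc x1; apply: le_trans (Re_le_cmod _) _.
apply: (unit_sup_ub (g := fun y => cmod (ip (X y) y)) (M := Num.sqrt c)).
  move=> y y1; apply: le_trans (cmod_ip_le _ y1) _.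
  by rewrite ler_wsqrtr // -[c]mulr1 -y1 Xc.
by rewrite /hnorm -/(sqnorm x) x1 sqrtr1.
Qed.

Section NumericalRadius.
Variables T Ts A B : V -> V.
Hypotheses (linT : is_linear T) (adjT : is_adjoint ip T Ts).
Hypotheses (linA : is_linear A) (posA : is_positive ip A).
Hypotheses (linB : is_linear B) (posB : is_positive ip B).
Hypotheses (AA : forall x, A (A x) = Ts (T x)) (BB : forall x, B (B x) = T (Ts x)).
Variable c : R.
Hypotheses (c0 : 0 <= c) (Tc : forall x, sqnorm (T x) <= c * sqnorm x).

Local Notation t := (opnorm ip T).
Local Notation t2 := (opnorm ip (fun x => T (T x))).
Local Notation P := (fun x => A (A x) + B (B x)).

Let adjA := positive_selfadjoint linA posA.
Let adjB := positive_selfadjoint linB posB.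
Let adjTs := adjoint_sym adjT.

Let T_le x : sqnorm (T x) <= t ^+ 2 * sqnorm x := sqnorm_le_opnorm linT c0 Tc x.

Let Ts_le x : sqnorm (Ts x) <= t ^+ 2 * sqnorm x := adjoint_bounded adjT (sqr_ge0 t) T_le x.

Let TT_le_t x : sqnorm (T (T x)) <= t ^+ 2 * t ^+ 2 * sqnorm x.
Proof. by apply: le_trans (T_le _) _; rewrite -mulrA ler_wpM2l ?sqr_ge0 ?T_le. Qed.

Let TT_le x : sqnorm (T (T x)) <= t2 ^+ 2 * sqnorm x.
Proof.
have tt0 : 0 <= t ^+ 2 * t ^+ 2 by rewrite mulr_ge0 ?sqr_ge0.
exact: sqnorm_le_opnorm (linear_comp linT linT) tt0 TT_le_t x.
Qed.

Let TsTs_le x : sqnorm (Ts (Ts x)) <= t2 ^+ 2 * sqnorm x.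
Proof.
have adjTT : is_adjoint ip (fun x => T (T x)) (fun x => Ts (Ts x)).
  by move=> u v; rewrite !adjT.
exact: adjoint_bounded adjTT (sqr_ge0 t2) TT_le x.
Qed.

Lemma opnorm_sqr_le : t2 <= t ^+ 2.
Proof.
by apply: opnorm_le; rewrite ?sqr_ge0 // => x; rewrite -expr2 TT_le_t.
Qed.

(* ||T |T^*| x|| <= ||T^2|| ||x||: with v = T B x, ||v||^2 = <x, B T^* v> and
   ||B T^* v|| = ||T^*2 v|| <= ||T^2|| ||v||. *)
Let T_absTs_le x : sqnorm (T (B x)) <= t2 ^+ 2 * sqnorm x.
Proof.
set v := T (B x).
have v_form : sqnorm v = Re (ip x (B (Ts v))) by rewrite /sqnorm {1}/v adjT adjB.
apply: le_of_sqr_le_mul; [exact: sqnorm_ge0 | by rewrite mulr_ge0 ?sqr_ge0 ?sqnorm_ge0 |].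
rewrite [X in X ^+ 2]v_form; apply: le_trans (Re_sqr_le_sqmod _) _.
apply: le_trans (ip_CS _ _) _; rewrite (sqnorm_absTs adjT linB posB BB) mulrAC mulrC.
by rewrite ler_wpM2r ?sqnorm_ge0 ?TsTs_le.
Qed.

Lemma numrad_absT_absTs_le : numrad ip (fun x => A (B x)) <= t2.
Proof.
apply: numrad_le; first exact: opnorm_ge0.
move=> x x1; apply: le_trans (ip_CS _ _) _.
by rewrite x1 mulr1 (sqnorm_absT adjT linA posA AA) -[t2 ^+ 2]mulr1 -x1 T_absTs_le.
Qed.

Let cross_le a b : 2 * Re (ip (T (T a)) b) <= t2 * sqnorm a + t2 * sqnorm b.
Proof.
apply: twice_le_add_of_sqr_le; try by rewrite mulr_ge0 ?opnorm_ge0 ?sqnorm_ge0.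
apply: le_trans (Re_sqr_le_sqmod _) _; apply: le_trans (ip_CS _ _) _.
have -> : t2 * sqnorm a * (t2 * sqnorm b) = t2 ^+ 2 * sqnorm a * sqnorm b by ring.
by rewrite ler_wpM2r ?sqnorm_ge0 ?TT_le.
Qed.

(* <P y, y> <= (||T||^2 + ||T^2||) ||y||^2 for P = |T|^2 + |T^*|^2: the form equals
   Re <z, y> for z = T T^* y + T^* T y, and ||z||^2 <= (||T||^2 + ||T^2||) Re <z, y>. *)
Let sum_form_le y : Re (ip (P y) y) <= (t ^+ 2 + t2) * sqnorm y.
Proof.
set a := Ts y; set b := T y; set z := T a + Ts b.
have Pz : ip (P y) y = ip z y by rewrite /= AA BB addrC.
have z_form : Re (ip z y) = sqnorm a + sqnorm b.
  by rewrite /z (sesqDl ipDl) ReD adjT adjTs.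
have z_le : sqnorm z <= (t ^+ 2 + t2) * Re (ip z y).
  rewrite /z sqnormD -adjT z_form.
  have := T_le a; have := Ts_le b; have := cross_le a b; lra.
rewrite Pz; apply: le_of_sqr_le_mul.
- by rewrite z_form addr_ge0 ?sqnorm_ge0.
- by rewrite mulr_ge0 ?addr_ge0 ?sqr_ge0 ?opnorm_ge0 ?sqnorm_ge0.
apply: le_trans (Re_sqr_le_sqmod _) _; apply: le_trans (ip_CS _ _) _.
by rewrite mulrAC ler_wpM2r ?sqnorm_ge0.
Qed.

Let P_le y : sqnorm (P y) <= (t ^+ 2 + t2) ^+ 2 * sqnorm y.
Proof.
have linP : is_linear P.
  move=> a u v; rewrite !(lmapD linA, lmapD linB, lmapZ linA, lmapZ linB).
  by rewrite scalerDr addrACA.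
have posP : is_positive ip P by move=> u; rewrite /= (sesqDl ipDl) adjA adjB addr_ge0.
have k0 : 0 <= t ^+ 2 + t2 by rewrite addr_ge0 ?sqr_ge0 ?opnorm_ge0.
exact: positive_sqnorm_le linP posP k0 sum_form_le y.
Qed.

Lemma opnorm_sum_sq_le : opnorm ip P <= t ^+ 2 + t2.
Proof. by apply: opnorm_le P_le; rewrite addr_ge0 ?sqr_ge0 ?opnorm_ge0. Qed.

(* For a unit vector x: (<A x, x> + <B x, x>)^2 <= ||(A + B) x||^2
   = <(A^2 + B^2) x, x> + 2 Re <A B x, x> <= ||A^2 + B^2|| + 2 w(A B). *)
Let abs_sum_sqr_le x : sqnorm x = 1 ->
  (Re (ip (A x) x) + Re (ip (B x) x)) ^+ 2
    <= 2 * numrad ip (fun x => A (B x)) + opnorm ip P.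
Proof.
move=> x1; rewrite -ReD -(sesqDl ipDl); apply: le_trans (Re_sqr_le_sqmod _) _.
apply: le_trans (ip_CS _ _) _; rewrite x1 mulr1 sqnormD.
have -> : sqnorm (A x) + sqnorm (B x) = Re (ip (P x) x).
  by rewrite /= (sesqDl ipDl) ReD adjA adjB.
have -> : Re (ip (A x) (B x)) = Re (ip (A (B x)) x) by rewrite adjA (herm_ReC ipC).
have := Re_form_le_opnorm P_le x1.
have AB_le y : sqnorm (A (B y)) <= t2 ^+ 2 * sqnorm y.
  by rewrite (sqnorm_absT adjT linA posA AA) T_absTs_le.
have := Re_form_le_numrad AB_le x1; lra.
Qed.

(* The first inequality: w(T) <= (2 w(|T| |T^*|) + |||T|^2 + |T^*|^2||)^(1/2) / 2,
   from |<T x, x>|^2 <= <A x, x> <B x, x> <= (<A x, x> + <B x, x>)^2 / 4. *)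
Lemma numrad_le_mixed :
  numrad ip T <= 2^-1 * Num.sqrt (2 * numrad ip (fun x => A (B x)) + opnorm ip P).
Proof.
have s0 : 0 <= 2 * numrad ip (fun x => A (B x)) + opnorm ip P.
  by rewrite addr_ge0 ?mulr_ge0 ?numrad_ge0 ?opnorm_ge0.
apply: numrad_le; first by rewrite mulr_ge0 ?sqrtr_ge0 ?invr_ge0.
move=> x x1; rewrite exprMn sqr_sqrtr // expr2 -invfM.
have := mixed_schwarz linT adjT linA posA linB posB AA BB c0 Tc x x.
have := abs_sum_sqr_le x1; have := sqr_ge0 (Re (ip (A x) x) - Re (ip (B x) x)).
rewrite !expr2; lra.
Qed.

Lemma numrad_bounds :
  numrad ip T <= 2^-1 * Num.sqrt (2 * numrad ip (fun x => A (B x)) + opnorm ip P)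
  /\ 2^-1 * Num.sqrt (2 * numrad ip (fun x => A (B x)) + opnorm ip P)
     <= 2^-1 * (Num.sqrt t2 + t).
Proof.
split; first exact: numrad_le_mixed.
rewrite ler_pM2l ?invr_gt0 ?ltr0n //.
apply: sqrt_2w_add_p_le; rewrite ?opnorm_ge0 //.
- exact: opnorm_sqr_le.
- exact: numrad_absT_absTs_le.
- exact: opnorm_sum_sq_le.
Qed.

End NumericalRadius.

End InnerProduct.

Local Close Scope complex_scope.
Local Close Scope classical_set_scope.

Theorem corollary3p6 (R : realType) (H : lmodType R[i]) (ip : H -> H -> R[i])
    (hilH : is_hilbert ip) (T Ts A B : H -> H)
    (hT : is_bounded_op ip T) (hTs : is_adjoint ip T Ts)
    (hA : is_pos_sqrt ip (fun x => Ts (T x)) A)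
    (hB : is_pos_sqrt ip (fun x => T (Ts x)) B) :
  numrad ip T
    <= 2^-1 * Num.sqrt (2 * numrad ip (fun x => A (B x))
                        + opnorm ip (fun x => A (A x) + B (B x)))
  /\ 2^-1 * Num.sqrt (2 * numrad ip (fun x => A (B x))
                      + opnorm ip (fun x => A (A x) + B (B x)))
     <= 2^-1 * (Num.sqrt (opnorm ip (fun x => T (T x))) + opnorm ip T).
Proof.
case: hilH => ipDl ipC ipP ipE _.
case: hT => linT [M TM]; case: hA => [[linA _] posA AA]; case: hB => [[linB _] posB BB].
have Tc := sqnorm_le_of_hnorm_le ipP TM.
exact (numrad_bounds ipDl ipC ipP ipE linT hTs linA posA linB posB AA BB (sqr_ge0 M) Tc).
Qed.
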